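(* Let $\mu_1\ge\mu_2$ be positive integers and let $n\ge \mu_1+\mu_2$ be an integer. Put $j=\mu_2+1$ and $k=\mu_1-\mu_2+1$. Then the total number of standard Young tableaux of skew shape $\lambda/(\mu_1,\mu_2)$, summed over all partitions $\lambda$ of $n$ having at most three parts (and containing $(\mu_1,\mu_2)$), filled with the numbers $1,2,\ldots,n-(\mu_1+\mu_2)$, equals \[\sum_i r_{i,j,k}\,M_{i+n-(\mu_1+\mu_2)},\] where $M_m$ is the $m$th Motzkin number and $r_{i,j,k}$ is the coefficient of $x^i$ in the polynomial \[r_{j,k}(x)=r_j(x)r_k(x)-r_{j-1}(x)r_{k-1}(x),\] the polynomials $r_m(x)$ being defined by $r_0(x)=0$ and \[\sum_{m=1}^\infty r_m(x)y^m=\frac{y}{(1-y)\big(1+(1-x)y+y^2\big)}.\]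
   Context: A partition $\lambda=(\lambda_1,\ldots,\lambda_l)$ of $n$ is a weakly decreasing sequence of positive integers summing to $n$; its parts are the $\lambda_i$. For partitions $\mu\subset\lambda$ (i.e. $\mu_i\le\lambda_i$ for all $i$), a standard Young tableau of skew shape $\lambda/\mu$ is a filling of the boxes of the Young diagram of $\lambda$ not in the Young diagram of $\mu$ with the numbers $1,2,\ldots,|\lambda|-|\mu|$, each used once, so that entries increase from left to right along rows and from top to bottom down columns. The Motzkin numbers are $M_m=\sum_{t=0}^{\lfloor m/2\rfloor}\frac{m!}{t!(t+1)!(m-2t)!}$, with generating function $\sum_{m\ge0}M_mx^m=\frac{1-x-\sqrt{1-2x-3x^2}}{2x^2}$. Equivalently, $r_{j,k}(x)$ is the coefficient of $y^jz^k$ in $\frac{yz(1-yz)}{(1-y)(1+(1-x)y+y^2)(1-z)(1+(1-x)z+z^2)}$. *)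

From mathcomp Require Import all_boot all_order all_algebra.
Set Implicit Arguments. Unset Strict Implicit. Unset Printing Implicit Defensive.
Import Order.TTheory GRing.Theory Num.Theory.

Definition is_partition (lam : seq nat) : bool :=
  sorted geq lam && all (fun x => 0 < x) lam.

Definition contained (mu lam : seq nat) : bool :=
  (size mu <= size lam) && all (fun i => nth 0 mu i <= nth 0 lam i) (iota 0 (size mu)).

(* Box (r, c) (0-indexed row r, column c) lies in the skew diagram lam/mu. *)
Definition in_skew (lam mu : seq nat) (r c : nat) : bool :=
  (nth 0 mu r <= c) && (c < nth 0 lam r).

(* Boxes of lam live in rows < size lam and columns < sumn lam. *)
Definition cellT (lam : seq nat) := ('I_(size lam) * 'I_(sumn lam))%type.

Definition in_skewc (lam mu : seq nat) (x : cellT lam) : bool :=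
  in_skew lam mu x.1 x.2.

(* A filling T of the boxes of lam/mu (value 0 on boxes outside lam/mu) is a
   standard Young tableau of shape lam/mu if it uses each of 1..N exactly once
   (N = |lam| - |mu|) on the boxes of lam/mu, and increases along rows and
   down columns. *)
Definition is_syt (lam mu : seq nat)
    (T : {ffun cellT lam -> 'I_(sumn lam).+1}) : bool :=
  let N := sumn lam - sumn mu in
  [&& [forall x, ~~ in_skewc mu x ==> (val (T x) == 0)],
      [forall x, in_skewc mu x ==> (0 < val (T x) <= N)],
      [forall v : 'I_(sumn lam).+1, (0 < val v <= N) ==>
         (#|[set x | in_skewc mu x && (T x == v)]| == 1)],
      [forall x, forall y, [&& in_skewc mu x, in_skewc mu y,
                              val x.1 == val y.1 & val x.2 < val y.2] ==>
                           (val (T x) < val (T y))] &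
      [forall x, forall y, [&& in_skewc mu x, in_skewc mu y,
                              val x.2 == val y.2 & val x.1 < val y.1] ==>
                           (val (T x) < val (T y))]].

Definition num_syt (lam mu : seq nat) : nat :=
  #|[set T : {ffun cellT lam -> 'I_(sumn lam).+1} | is_syt mu T]|.

Definition lam3 (a b c : nat) : seq nat := [seq x <- [:: a; b; c] | 0 < x].

Definition motzkin (m : nat) : nat :=
  \sum_(t < (m./2).+1) m`! %/ (t`! * (t.+1)`! * (m - 2 * t)`!).

(* sum_{m>=1} r_m y^m = y / ((1-y)(1+(1-x)y+y^2)), r_0 = 0.
   Since (1-y)(1+(1-x)y+y^2) = 1 - x y + x y^2 - y^3, this is equivalent to
   r_0 = 0, r_1 = 1, and r_m = x r_{m-1} - x r_{m-2} + r_{m-3} for m >= 2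
   (with r_{-1} = 0).  rtrip m = (r_m, r_{m-1}, r_{m-2}). *)
Fixpoint rtrip (m : nat) : {poly int} * {poly int} * {poly int} :=
  match m with
  | 0 => (0, 0, 0)
  | 1 => (1, 0, 0)
  | m'.+1 => let: (a, b, c) := rtrip m' in ('X * a - 'X * b + c, a, b)
  end%R.

Definition rpoly (m : nat) : {poly int} := (rtrip m).1.1.

Definition rjk (j k : nat) : {poly int} :=
  (rpoly j * rpoly k - rpoly j.-1 * rpoly k.-1)%R.

(* Let L_N be the linear functional on Z[x] with L_N(x^i) = M_(i+N), so that the
   right-hand side of the theorem is L_(n-|mu|)(r_(j,k)).  Since L_N(x p) = L_(N+1)(p)
   and x r_(j,k) = r_(j,k+1) + r_(j+1,k-1) + r_(j-1,k), the numbers L_N(r_(m2-m3+1,m1-m2+1))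
   obey the same recursion in N as the numbers of standard tableaux of the skew shapes
   lam/(m1,m2,m3), |lam| = |m| + N, with at most three rows: removing the entry 1, which
   sits at an addable corner of (m1,m2,m3), and lowering the other entries by one is a
   bijection onto the tableaux of the shape with that corner added.  For N = 0 both sides
   are 1.  On the tableau side only the empty tableau remains.  On the polynomial side
   r_m = P_0 + ... + P_(m-1), where the P_h (x P_h = P_(h+1) + P_h + P_(h-1)) are the
   orthogonal polynomials of L_0, hence L_0(r_j r_k) = min(j,k); orthogonality follows
   from L_N(P_h) being the number of Motzkin paths of length N from height h to 0. *)

From HB Require Import structures.
From mathcomp Require Import all_boot all_order all_algebra.
From mathcomp Require Import ring zify.
Set Implicit Arguments. Unset Strict Implicit. Unset Printing Implicit Defensive.
Import GRing.Theory Num.Theory.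
Local Open Scope ring_scope.

(** * The Motzkin moment functional *)

Lemma big_ord_widen_vanish (R : nmodType) n1 n2 (F : nat -> R) :
  (n1 <= n2)%N -> (forall i, (n1 <= i < n2)%N -> F i = 0) ->
  \sum_(i < n1) F i = \sum_(i < n2) F i.
Proof.
move=> le_n12 F0; rewrite (big_ord_widen _ _ le_n12) [RHS](bigID (fun i : 'I_n2 => i < n1)%N).
rewrite /= [X in _ = _ + X]big1 ?addr0 // => i; rewrite -leqNgt => le_n1i.
by apply: F0; rewrite le_n1i ltn_ord.
Qed.

Implicit Types p q : {poly int}.

Definition motzkin_moment (N : nat) p : int :=
  \sum_(i < size p) p`_i * (motzkin (i + N))%:Z.

Lemma motzkin_moment_widen N p n : (size p <= n)%N ->
  motzkin_moment N p = \sum_(i < n) p`_i * (motzkin (i + N))%:Z.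
Proof.
move=> le_pn.
apply: (big_ord_widen_vanish (F := fun i => p`_i * (motzkin (i + N))%:Z)) => // i.
by case/andP=> le_pi _; rewrite nth_default ?mul0r.
Qed.

Lemma motzkin_moment_is_zmod_morphism N : zmod_morphism (motzkin_moment N).
Proof.
move=> p q; set n := maxn (size p) (size q).
rewrite !(@motzkin_moment_widen _ _ n) ?leq_maxl ?leq_maxr //; last first.
  by rewrite (leq_trans (size_polyD _ _)) // size_polyN.
by rewrite -sumrB; apply: eq_bigr => i _; rewrite coefB mulrBl.
Qed.

HB.instance Definition _ N :=
  GRing.isZmodMorphism.Build {poly int} int (motzkin_moment N)
    (motzkin_moment_is_zmod_morphism N).

Lemma motzkin_momentXM N p : motzkin_moment N ('X * p) = motzkin_moment N.+1 p.
Proof.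
rewrite (@motzkin_moment_widen _ _ (size p).+1); last first.
  by rewrite mulrC (leq_trans (size_polyMleq _ _)) // size_polyX addn2.
rewrite big_ord_recl coefXM mul0r add0r.
by apply: eq_bigr => i _; rewrite coefXM addSnnS.
Qed.

Lemma motzkin_moment1 N : motzkin_moment N 1 = (motzkin N)%:Z.
Proof. by rewrite /motzkin_moment size_poly1 big_ord1 coefC mul1r. Qed.

(** * Motzkin paths *)

(* Walks of s steps +-1 from height h down to 0 that never go below 0. *)
Fixpoint dyck_walks (s h : nat) : int :=
  if s is s'.+1 then dyck_walks s' h.+1 + (if h is h'.+1 then dyck_walks s' h' else 0)
  else (h == 0)%:R.

(* ballot t 0 is the t-th Catalan number. *)
Definition ballot (u h : nat) : int :=
  ('C(u.*2 + h, u))%:Z - (if u is u'.+1 then 'C(u.*2 + h, u') else 0)%:Z.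

Lemma dyck_walks_small s h : (s < h)%N -> dyck_walks s h = 0.
Proof. by elim: s h => [|s IHs] [|h] //= lt_sh; rewrite !IHs ?addr0 //; lia. Qed.

Lemma dyck_walks_odd s h : odd (s + h) -> dyck_walks s h = 0.
Proof.
elim: s h => [|s IHs] [|h] //= odd_sh; rewrite !IHs ?addr0 //;
  by move: odd_sh; rewrite ?addnS ?addn0 ?addn1 /= ?negbK.
Qed.

Lemma ballotSS u h : ballot u.+1 h.+1 = ballot u h.+2 + ballot u.+1 h.
Proof.
rewrite /ballot (_ : u.+1.*2 + h.+1 = (u.*2 + h.+2).+1)%N; last by rewrite doubleS; lia.
rewrite (_ : u.+1.*2 + h = u.*2 + h.+2)%N; last by rewrite doubleS; lia.
case: u => [|u]; rewrite binS ?bin0; last rewrite [X in _ - X%:Z]binS.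
all: by rewrite !PoszD; lia.
Qed.

Lemma ballotS0 u : ballot u.+1 0 = ballot u 1.
Proof.
rewrite /ballot !addn0 doubleS addn1; case: u => [|u]; first by rewrite !bin0.
have Csym : 'C(u.+1.*2.+1, u.+2) = 'C(u.+1.*2.+1, u.+1).
  by rewrite -[RHS]bin_sub; [congr 'C(_, _) | ]; lia.
by rewrite [in LHS]binS [X in _ - X%:Z]binS Csym !PoszD; lia.
Qed.

Lemma dyck_walksE s u h : (u.*2 + h)%N = s -> dyck_walks s h = ballot u h.
Proof.
elim: s u h => [|s IHs] [|u] h /=.
- by case: h => //= _; rewrite /ballot bin0.
- by rewrite doubleS addSn.
- move=> eq_hs; rewrite dyck_walks_small -?eq_hs // add0r.
  by case: h eq_hs => //= h [eq_hs]; rewrite (IHs 0%N) // /ballot !bin0.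
- rewrite doubleS !addSn => -[eq_s]; rewrite (IHs u h.+1) ?addnS //.
  case: h eq_s => [|h] eq_s; first by rewrite addr0 ballotS0.
  by rewrite (IHs u.+1 h) ?ballotSS // doubleS addSn -addnS.
Qed.

Lemma dyck_walksS s h :
  dyck_walks s.+1 h = dyck_walks s h.+1 + (if h is h'.+1 then dyck_walks s h' else 0).
Proof. by []. Qed.

Arguments dyck_walks : simpl never.

(* Motzkin paths of length m from height h to 0: choose which s steps are not flat. *)
Definition motzkin_walks (m h : nat) : int :=
  \sum_(s < m.+1) ('C(m, s))%:Z * dyck_walks s h.

Lemma motzkin_walks0 h : motzkin_walks 0 h = (h == 0)%:R.
Proof. by rewrite /motzkin_walks big_ord1 bin0 mul1r. Qed.

Lemma motzkin_walksS m h : motzkin_walks m.+1 h =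
  motzkin_walks m h.+1 + motzkin_walks m h + (if h is h'.+1 then motzkin_walks m h' else 0).
Proof.
have widen (F : nat -> int) :
    \sum_(s < m.+1) ('C(m, s))%:Z * F s = \sum_(s < m.+2) ('C(m, s))%:Z * F s.
  apply: (big_ord_widen_vanish (F := fun s => ('C(m, s))%:Z * F s)) => // s.
  by case/andP=> lt_ms _; rewrite bin_small ?mul0r.
rewrite /motzkin_walks big_ord_recl /=.
under eq_bigr do rewrite binS PoszD mulrDl.
rewrite big_split /= addrA.
rewrite [X in X + _ = _](_ : _ = \sum_(s < m.+1) 'C(m, s)%:Z * dyck_walks s h); last first.
  by rewrite (widen (dyck_walks^~ h)) [RHS]big_ord_recl !bin0.
rewrite [LHS]addrC [RHS]addrAC; congr (_ + _).
case: h => [|h]; rewrite ?addr0 -?big_split; apply: eq_bigr => s _.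
  by rewrite dyck_walksS addr0.
by rewrite dyck_walksS mulrDr.
Qed.

Lemma ballot0_mul t : ballot t 0 * t.+1%:Z = ('C(t.*2, t))%:Z.
Proof.
case: t => [|u]; rewrite /ballot ?bin0 // addn0 mulrBl -!PoszM.
have := mul_bin_left u.+1.*2 u; rewrite (_ : u.+1.*2 - u = u.+2)%N; last by lia.
nia.
Qed.

Lemma motzkin_summandE m t : (t.*2 <= m)%N ->
  ((m`! %/ (t`! * t.+1`! * (m - 2 * t)`!))%N)%:Z = ('C(m, t.*2))%:Z * ballot t 0.
Proof.
move=> le_2t_m; set b := `|ballot t 0|%N.
have ballot_b : ballot t 0 = b%:Z.
  by rewrite gez0_abs // -(pmulr_lge0 _ (ltz_nat 0 t.+1)) ballot0_mul.
have b_mul : (b * t.+1 = 'C(t.*2, t))%N.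
  by apply/eqP; rewrite -eqz_nat PoszM -ballot_b ballot0_mul.
have fact_m : m`! = ('C(m, t.*2) * b * (t`! * t.+1`! * (m - 2 * t)`!))%N.
  rewrite -(bin_fact le_2t_m) mul2n -addnn -(bin_fact (leq_addr t t)) addnK.
  by rewrite addnn -b_mul factS; ring.
by rewrite fact_m mulnK ?muln_gt0 ?fact_gt0 // ballot_b PoszM.
Qed.

Lemma sum_ord_double (R : nmodType) K (F : nat -> R) :
  \sum_(s < K.*2) F s = \sum_(t < K) (F t.*2 + F t.*2.+1).
Proof.
by elim: K => [|K IHK]; rewrite ?big_ord0 // doubleS !big_ord_recr /= IHK addrA.
Qed.

Lemma motzkin_walks_height0 m : motzkin_walks m 0 = (motzkin m)%:Z.
Proof.
set F := fun s => 'C(m, s)%:Z * dyck_walks s 0.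
have le_m_2K : (m.+1 <= m./2.+1.*2)%N.
  by rewrite doubleS -[m in (m < _)%N]odd_double_half; case: (odd m); lia.
rewrite /motzkin_walks (big_ord_widen_vanish (F := F) le_m_2K); last first.
  by move=> s /andP[lt_ms _]; rewrite /F bin_small ?mul0r.
rewrite (sum_ord_double _ F) /motzkin (big_morph Posz PoszD (erefl 0%:Z)).
apply: eq_bigr => t _; have le_2t_m : (t.*2 <= m)%N.
  have := ltn_ord t; rewrite ltnS -leq_double -[m in (_ <= m)%N]odd_double_half.
  by case: (odd m); lia.
rewrite /F motzkin_summandE // (dyck_walksE (u := t)) ?addn0 //.
by rewrite dyck_walks_odd ?mulr0 ?addr0 // addn0 /= odd_double.
Qed.

(** * Orthogonal polynomials of the Motzkin moments *)

Section MotzkinOrthogonalPolynomials.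

Fixpoint motzkin_opoly (h : nat) : {poly int} :=
  match h with
  | 0 => 1
  | 1 => 'X - 1
  | (h'.+1 as h1).+1 => ('X - 1) * motzkin_opoly h1 - motzkin_opoly h'
  end.

Local Notation P := motzkin_opoly.

Lemma motzkin_opoly1 : P 1 = 'X - 1. Proof. by []. Qed.
Lemma motzkin_opolySS h : P h.+2 = ('X - 1) * P h.+1 - P h.
Proof. by []. Qed.

Arguments motzkin_opoly : simpl never.

Lemma mulXsub1_opoly h : ('X - 1) * P h = P h.+1 + (if h is h'.+1 then P h' else 0).
Proof. by case: h => [|h]; rewrite ?mulr1 ?addr0 // motzkin_opolySS subrK. Qed.

Lemma motzkin_moment_opoly h m : motzkin_moment m (P h) = motzkin_walks m h.
Proof.
elim/ltn_ind: h m => -[_ m|h IH m]; first by rewrite motzkin_moment1 motzkin_walks_height0.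
have -> : P h.+1 = ('X - 1) * P h - (if h is h'.+1 then P h' else 0).
  by rewrite mulXsub1_opoly addrK.
rewrite mulrBl mul1r !raddfB /= motzkin_momentXM !IH // motzkin_walksS.
by case: h IH => [|h] IH; rewrite ?raddf0 ?IH //; ring.
Qed.

Lemma motzkin_opoly_orthogonal a b : motzkin_moment 0 (P a * P b) = (a == b)%:R.
Proof.
elim/ltn_ind: a b => -[|[|a]] IH b.
- by rewrite mul1r motzkin_moment_opoly motzkin_walks0 eq_sym.
- rewrite mulXsub1_opoly raddfD /= motzkin_moment_opoly motzkin_walks0.
  by case: b => [|[|b]]; rewrite ?raddf0 ?motzkin_moment_opoly ?motzkin_walks0 ?addr0.
rewrite motzkin_opolySS mulrBl [_ * P a.+1]mulrC -mulrA mulXsub1_opoly mulrDr.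
rewrite !raddfB !raddfD /= !IH //.
case: b => [|b]; rewrite ?mulr0 ?raddf0 ?eqSS; first by rewrite addr0 subrr.
by rewrite IH // addrAC subrr add0r.
Qed.

Lemma rtripSS m :
  rtrip m.+2 = let: (a, b, c) := rtrip m.+1 in ('X * a - 'X * b + c, a, b).
Proof. by []. Qed.

Lemma rtripE m : rtrip m.+2 = (rpoly m.+2, rpoly m.+1, rpoly m).
Proof.
elim: m => [//|m IHm]; rewrite [in LHS]rtripSS IHm.
by rewrite /rpoly [rtrip m.+3]rtripSS IHm.
Qed.

Lemma rpolySSS m : rpoly m.+3 = 'X * rpoly m.+2 - 'X * rpoly m.+1 + rpoly m.
Proof. by rewrite /rpoly rtripSS rtripE. Qed.

Lemma rpoly_sum_opoly m : rpoly m = \sum_(h < m) P h.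
Proof.
elim/ltn_ind: m => -[|[|[|m]]] IH; rewrite ?big_ord0 ?big_ord1 //.
  by rewrite big_ord_recr big_ord1 /= /rpoly /= motzkin_opoly1 mulr1 mulr0; ring.
rewrite rpolySSS !IH; [|lia..].
by rewrite !big_ord_recr /= motzkin_opolySS; ring.
Qed.

Lemma sum_ord_eq_indicator (R : pzSemiRingType) (a k : nat) :
  \sum_(b < k) ((a == b)%:R : R) = (a < k)%:R.
Proof.
elim: k => [|k IHk]; first by rewrite big_ord0 ltn0.
by rewrite big_ord_recr /= IHk -natrD ltnS; case: ltngtP.
Qed.

Lemma sum_ord_lt_indicator (R : pzSemiRingType) j k :
  \sum_(a < j) ((a < k)%:R : R) = (minn j k)%:R.
Proof.
elim: j => [|j IHj]; first by rewrite big_ord0 min0n.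
by rewrite big_ord_recr /= IHj -natrD; congr _%:R; rewrite !minnE; case: ltnP; lia.
Qed.

Lemma motzkin_moment0_rpolyM j k :
  motzkin_moment 0 (rpoly j * rpoly k) = (minn j k)%:R.
Proof.
rewrite !rpoly_sum_opoly mulr_suml raddf_sum /= -sum_ord_lt_indicator.
apply: eq_bigr => a _; rewrite mulr_sumr raddf_sum /= -sum_ord_eq_indicator.
by apply: eq_bigr => b _; rewrite motzkin_opoly_orthogonal.
Qed.

Lemma motzkin_moment0_rjk j k :
  (0 < j)%N -> (0 < k)%N -> motzkin_moment 0 (rjk j k) = 1.
Proof.
case: j k => [|j] [|k] // _ _.
by rewrite raddfB /= !motzkin_moment0_rpolyM minnSS -natrB ?subSnn.
Qed.

Lemma rpolyS m : (0 < m)%N -> rpoly m.+1 = 'X * rpoly m - 'X * rpoly m.-1 + rpoly m.-2.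
Proof. by case: m => [|[|m]] // _; apply: rpolySSS. Qed.

Lemma mulX_rjk j k : (0 < j)%N -> (0 < k)%N ->
  'X * rjk j k = rjk j k.+1 + rjk j.+1 k.-1 + rjk j.-1 k.
Proof.
move=> j_gt0 k_gt0; rewrite /rjk /= (rpolyS k_gt0) (rpolyS j_gt0).
by case: j j_gt0 => [|j] // _; case: k k_gt0 => [|k] // _ /=; ring.
Qed.

End MotzkinOrthogonalPolynomials.

Local Close Scope ring_scope.

(** * Standard skew tableaux *)

Lemma card_set_bij (T U : finType) (P : pred T) (Q : pred U) (f : T -> U) (g : U -> T) :
  {in P, forall a, Q (f a)} -> {in Q, forall b, P (g b)} ->
  {in P, cancel f g} -> {in Q, cancel g f} ->
  #|[set a | P a]| = #|[set b | Q b]|.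
Proof.
move=> PQf QPg fK gK; rewrite -(card_in_imset (f := f)); last first.
  by move=> a a'; rewrite !inE => Pa Pa' eq_f; rewrite -(fK a Pa) eq_f fK.
apply: eq_card => b; rewrite inE; apply/imsetP/idP => [[a] | Qb].
  by rewrite inE => Pa ->; apply: PQf.
by exists (g b); rewrite ?inE ?gK // QPg.
Qed.

Lemma card_set_partition_nat (T : finType) (P : pred T) (f : T -> nat) K :
  {in P, forall a, f a < K} ->
  #|[set a | P a]| = \sum_(r < K) #|[set a | P a && (f a == r)]|.
Proof.
move=> ltfK.
have cardE (Q : pred T) : #|[set a | Q a]| = \sum_(a | Q a) 1.
  by rewrite -sum1_card; apply: eq_bigl => a; rewrite inE.
under eq_bigr do rewrite cardE big_mkcondr /=.
rewrite exchange_big cardE; apply: eq_bigr => a Pa.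
rewrite (bigD1 (Ordinal (ltfK a Pa))) //= eqxx big1 ?addn0 // => r.
by rewrite -val_eqE /= eq_sym => /negbTE ->.
Qed.

Local Notation filling lam := {ffun cellT lam -> 'I_(sumn lam).+1}.

Lemma is_sytP (lam mu : seq nat) (T : filling lam) :
  reflect [/\ forall x, ~~ in_skewc mu x -> T x = 0 :> nat,
              forall x, in_skewc mu x -> 0 < T x <= sumn lam - sumn mu,
              forall v : 'I_(sumn lam).+1, 0 < v <= sumn lam - sumn mu ->
                #|[set x | in_skewc mu x && (T x == v)]| = 1,
              forall x y, in_skewc mu x -> in_skewc mu y ->
                x.1 = y.1 :> nat -> x.2 < y.2 -> T x < T y &
              forall x y, in_skewc mu x -> in_skewc mu y ->
                x.2 = y.2 :> nat -> x.1 < y.1 -> T x < T y]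
          (is_syt mu T).
Proof.
apply: (iffP and5P) => -[out_0 in_range once rows cols]; split.
- by move=> x /(implyP (forallP out_0 x))/eqP.
- by move=> x Sx; apply: (implyP (forallP in_range x) Sx).
- by move=> v /(implyP (forallP once v))/eqP.
- move=> x y Sx Sy eq_r lt_c; apply: (implyP (forallP (forallP rows x) y)).
  by apply/and4P; split=> //; apply/eqP.
- move=> x y Sx Sy eq_c lt_r; apply: (implyP (forallP (forallP cols x) y)).
  by apply/and4P; split=> //; apply/eqP.
- by apply/forallP => x; apply/implyP => /out_0/eqP.
- by apply/forallP => x; apply/implyP; apply: in_range.
- by apply/forallP => v; apply/implyP => /once/eqP.
- by apply/'forall_forallP => x y; apply/implyP => /and4P[Sx Sy /eqP]; apply: rows.
- by apply/'forall_forallP => x y; apply/implyP => /and4P[Sx Sy /eqP]; apply: cols.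
Qed.

Lemma cell_eq (lam : seq nat) (x y : cellT lam) :
  x.1 = y.1 :> nat -> x.2 = y.2 :> nat -> x = y.
Proof. by case: x y => [x1 x2] [y1 y2] /= /val_inj -> /val_inj ->. Qed.

Lemma syt_inj (lam mu : seq nat) (T : filling lam) x y :
  is_syt mu T -> in_skewc mu x -> in_skewc mu y -> T x = T y -> x = y.
Proof.
move=> /is_sytP[_ in_range once _ _] Sx Sy eq_T.
have /eqP/cards1P[z Tz] := once _ (in_range x Sx).
have : x \in [set z] by rewrite -Tz inE Sx eqxx.
have : y \in [set z] by rewrite -Tz inE Sy eq_T eqxx.
by rewrite !inE => /eqP -> /eqP ->.
Qed.

Section RemoveMinimalCell.

Variables (lam mu mu' : seq nat) (x0 : cellT lam).
Implicit Types (x y : cellT lam) (T : filling lam).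
Hypotheses (skew_mu : forall x, in_skewc mu x = in_skewc mu' x || (x == x0))
  (x0_notin_mu' : ~~ in_skewc mu' x0)
  (sumn_mu' : sumn mu' = (sumn mu).+1)
  (sumn_mu_lt : sumn mu < sumn lam)
  (x0_row_min : forall x, in_skewc mu x -> x.1 = x0.1 :> nat -> x0.2 <= x.2)
  (x0_col_min : forall x, in_skewc mu x -> x.2 = x0.2 :> nat -> x0.1 <= x.1).

Let x0_in_mu : in_skewc mu x0. Proof. by rewrite skew_mu eqxx orbT. Qed.
Let skew_mu'_mu x : in_skewc mu' x -> in_skewc mu x.
Proof. by rewrite skew_mu => ->. Qed.
Let skew_mu'_neq x : in_skewc mu' x -> x != x0.
Proof. by apply: contraTneq => ->. Qed.
Let skew_mu_mu' x : in_skewc mu x -> x != x0 -> in_skewc mu' x.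
Proof. by rewrite skew_mu => /orP[// | ->]. Qed.

Definition lower_filling (T : filling lam) : filling lam := [ffun x => inord (T x).-1].

Definition raise_filling (T : filling lam) : filling lam :=
  [ffun x => if x == x0 then inord 1 else if in_skewc mu' x then inord (T x).+1 else ord0].

Lemma lower_fillingE T x : lower_filling T x = (T x).-1 :> nat.
Proof. by rewrite ffunE inordK // ltnS (leq_trans (leq_pred _)) // -ltnS. Qed.

Lemma raise_fillingE T x : is_syt mu' T ->
  raise_filling T x = (if x == x0 then 1 else if in_skewc mu' x then (T x).+1 else 0) :> nat.
Proof.
move=> /is_sytP[_ in_range _ _ _]; rewrite ffunE.
case: eqP => _; first by rewrite inordK // ltnS (leq_ltn_trans _ sumn_mu_lt).
case: ifP => // S'x; rewrite inordK //; have := in_range x S'x; lia.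
Qed.

Lemma syt_lower_filling T : is_syt mu T -> T x0 = 1 :> nat -> is_syt mu' (lower_filling T).
Proof.
move=> sytT T_x0; have /is_sytP[out_0 in_range once rows cols] := sytT.
have T_gt1 x : in_skewc mu' x -> 1 < T x.
  move=> S'x; have : T x != T x0 :> nat.
    apply/eqP => /val_inj T_eq; move/eqP: (skew_mu'_neq S'x); apply.
    exact: syt_inj sytT (skew_mu'_mu S'x) x0_in_mu T_eq.
  by have := in_range x (skew_mu'_mu S'x); rewrite T_x0; lia.
apply/is_sytP; split => [x | x S'x | v | x y S'x S'y | x y S'x S'y]; rewrite ?lower_fillingE.
- move=> nS'x; case: (eqVneq x x0) => [-> | x_neq]; first by rewrite T_x0.
  by rewrite out_0 // skew_mu negb_or nS'x x_neq.
- by have := T_gt1 x S'x; have := in_range x (skew_mu'_mu S'x); rewrite sumn_mu'; lia.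
- rewrite sumn_mu' => v_range; have v1_lt : v.+1 < (sumn lam).+1 by lia.
  rewrite -(once (Ordinal v1_lt)) /=; last by lia.
  apply: eq_card => x; rewrite !inE -!val_eqE /= lower_fillingE.
  case: (eqVneq x x0) => [-> | x_neq]; first by rewrite T_x0 (negbTE x0_notin_mu') x0_in_mu; lia.
  case S'x: (in_skewc mu' x); last by rewrite skew_mu S'x (negbTE x_neq).
  by rewrite skew_mu'_mu //; have := T_gt1 x S'x; lia.
- move=> eq_r lt_c; have := T_gt1 x S'x.
  by have := rows x y (skew_mu'_mu S'x) (skew_mu'_mu S'y) eq_r lt_c; lia.
- move=> eq_c lt_r; have := T_gt1 x S'x.
  by have := cols x y (skew_mu'_mu S'x) (skew_mu'_mu S'y) eq_c lt_r; lia.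
Qed.

Lemma syt_raise_filling T : is_syt mu' T -> is_syt mu (raise_filling T).
Proof.
move=> sytT; have /is_sytP[_ in_range once rows cols] := sytT.
have T_gt0 x : in_skewc mu' x -> 0 < T x by case/in_range/andP.
apply/is_sytP; split => [x | x Sx | v | x y Sx Sy | x y Sx Sy]; rewrite ?raise_fillingE //.
- by rewrite skew_mu negb_or => /andP[/negbTE-> /negbTE->].
- case: (eqVneq x x0) => [_ | x_neq]; first by lia.
  have := in_range x (skew_mu_mu' Sx x_neq); rewrite skew_mu_mu' // sumn_mu'; lia.
- move=> v_range; case: (eqVneq (v : nat) 1) => [v1 | v_neq1].
    apply/eqP/cards1P; exists x0; apply/setP => x; rewrite !inE -val_eqE /= raise_fillingE // v1.
    case: (eqVneq x x0) => [-> | x_neq]; first by rewrite x0_in_mu.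
    case S'x: (in_skewc mu' x); last by rewrite andbF.
    by move: (T_gt0 x S'x); case: (nat_of_ord (T x)) => // n _; rewrite andbF.
  have w_lt : v.-1 < (sumn lam).+1 by lia.
  rewrite -(once (Ordinal w_lt)) /=; last by rewrite sumn_mu'; lia.
  apply: eq_card => x; rewrite !inE -!val_eqE /= raise_fillingE //.
  case: (eqVneq x x0) => [-> | x_neq].
    by rewrite (negbTE x0_notin_mu') eq_sym (negbTE v_neq1) andbF.
  rewrite skew_mu (negbTE x_neq) orbF; case: (in_skewc mu' x) => //=.
  by apply/eqP/eqP; lia.
- move=> eq_r lt_c; have y_neq : y != x0.
    by apply/eqP => y_x0; subst y; have := x0_row_min Sx eq_r; lia.
  rewrite (negbTE y_neq) (skew_mu_mu' Sy y_neq); have := T_gt0 y (skew_mu_mu' Sy y_neq).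
  case: (eqVneq x x0) => [_ | x_neq]; first by lia.
  rewrite (skew_mu_mu' Sx x_neq).
  by have := rows x y (skew_mu_mu' Sx x_neq) (skew_mu_mu' Sy y_neq) eq_r lt_c; lia.
- move=> eq_c lt_r; have y_neq : y != x0.
    by apply/eqP => y_x0; subst y; have := x0_col_min Sx eq_c; lia.
  rewrite (negbTE y_neq) (skew_mu_mu' Sy y_neq); have := T_gt0 y (skew_mu_mu' Sy y_neq).
  case: (eqVneq x x0) => [_ | x_neq]; first by lia.
  rewrite (skew_mu_mu' Sx x_neq).
  by have := cols x y (skew_mu_mu' Sx x_neq) (skew_mu_mu' Sy y_neq) eq_c lt_r; lia.
Qed.

Lemma raise_lower_filling T :
  is_syt mu T -> T x0 = 1 :> nat -> raise_filling (lower_filling T) = T.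
Proof.
move=> sytT T_x0; have /is_sytP[out_0 in_range _ _ _] := sytT.
apply/ffunP => x; apply: val_inj; rewrite /= raise_fillingE ?syt_lower_filling //.
case: (eqVneq x x0) => [-> // | x_neq]; case S'x: (in_skewc mu' x).
  by rewrite lower_fillingE prednK //; case/andP: (in_range x (skew_mu'_mu S'x)).
by rewrite out_0 // skew_mu S'x (negbTE x_neq).
Qed.

Lemma lower_raise_filling T : is_syt mu' T -> lower_filling (raise_filling T) = T.
Proof.
move=> sytT; have /is_sytP[out_0 _ _ _ _] := sytT.
apply/ffunP => x; apply: val_inj; rewrite /= lower_fillingE raise_fillingE //.
case: (eqVneq x x0) => [-> | x_neq]; first by rewrite out_0.
by case S'x: (in_skewc mu' x); rewrite // out_0 ?S'x.
Qed.

Lemma card_syt_one_at :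
  #|[set T : filling lam | is_syt mu T && (T x0 == 1 :> nat)]| = num_syt lam mu'.
Proof.
apply: (card_set_bij (f := lower_filling) (g := raise_filling)) => T.
- by case/andP=> sytT /eqP T_x0; apply: syt_lower_filling.
- by move=> sytT; rewrite syt_raise_filling // raise_fillingE ?eqxx.
- by case/andP=> sytT /eqP T_x0; apply: raise_lower_filling.
- exact: lower_raise_filling.
Qed.

End RemoveMinimalCell.

Lemma syt_gt0 (lam mu : seq nat) (T : filling lam) x :
  is_syt mu T -> in_skewc mu x -> 0 < T x.
Proof. by case/is_sytP=> _ in_range _ _ _ /in_range/andP[]. Qed.

(* The junk value 0 only occurs when no cell holds 1, i.e. for the empty shape. *)
Definition row_of_one (lam mu : seq nat) (T : filling lam) : nat :=
  if [pick x | in_skewc mu x && (T x == 1 :> nat)] is Some x then x.1 else 0.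

Lemma row_of_oneP (lam mu : seq nat) (T : filling lam) :
  is_syt mu T -> sumn mu < sumn lam ->
  exists x, [/\ in_skewc mu x, T x = 1 :> nat & x.1 = row_of_one mu T :> nat].
Proof.
move=> sytT lt_mu_lam; rewrite /row_of_one; case: pickP => [x /andP[Sx /eqP Tx] | no_one].
  by exists x.
have /is_sytP[_ _ once _ _] := sytT.
have one_lt : 1 < (sumn lam).+1 by rewrite ltnS (leq_ltn_trans _ lt_mu_lam).
have one_range : 0 < Ordinal one_lt <= sumn lam - sumn mu by rewrite /= subn_gt0.
have /eqP/cards1P[z one_z] := once _ one_range.
have := no_one z; have : z \in [set z] by rewrite inE.
by rewrite -one_z inE -val_eqE => ->.
Qed.

Definition addable_cell (lam mu : seq nat) (r : nat) : bool :=
  (nth 0 mu r < nth 0 lam r) && ((r == 0) || (nth 0 mu r < nth 0 mu r.-1)).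

Lemma syt_one_addable (lam mu : seq nat) (T : filling lam) x :
  (forall i, nth 0 lam i.+1 <= nth 0 lam i) ->
  is_syt mu T -> in_skewc mu x -> T x = 1 :> nat ->
  x.2 = nth 0 mu x.1 :> nat /\ addable_cell lam mu x.1.
Proof.
move=> lam_dec sytT Sx Tx1; have /is_sytP[_ _ _ rows cols] := sytT.
have below_one y : in_skewc mu y -> T y < T x -> False.
  by move=> Sy; rewrite Tx1 ltnS leqn0 => /eqP Ty0; have := syt_gt0 sytT Sy; rewrite Ty0.
move: (Sx); rewrite /in_skewc /in_skew => /andP[mu_le_x lt_x_lam].
have x2_mu : x.2 = nth 0 mu x.1 :> nat.
  apply/eqP; rewrite eqn_leq mu_le_x andbT leqNgt; apply/negP => mu_lt_x.
  have lt_mu_lam : nth 0 mu x.1 < sumn lam by rewrite (ltn_trans mu_lt_x).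
  pose y : cellT lam := (x.1, Ordinal lt_mu_lam).
  have Sy : in_skewc mu y by rewrite /in_skewc /in_skew /= leqnn (ltn_trans mu_lt_x).
  exact: below_one Sy (rows y x Sy Sx erefl mu_lt_x).
split=> //; rewrite /addable_cell -x2_mu lt_x_lam /=.
case: (posnP x.1) => [-> // | x1_gt0]; rewrite ltnNge; apply/negP => mu_dec_fails.
have lt_up : x.1.-1 < size lam by rewrite (leq_ltn_trans (leq_pred _)).
pose y : cellT lam := (Ordinal lt_up, x.2).
have Sy : in_skewc mu y.
  rewrite /in_skewc /in_skew /= (leq_trans mu_dec_fails) //=.
  by rewrite (leq_trans lt_x_lam) //; have := lam_dec x.1.-1; rewrite prednK.
by apply: below_one Sy (cols y x Sy Sx erefl _); rewrite /= prednK.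
Qed.

Lemma nth_le_sumn (s : seq nat) i : nth 0 s i <= sumn s.
Proof. by elim: s i => [|a s IHs] [|i] //=; rewrite ?leq_addr // (leq_trans (IHs i)) ?leq_addl. Qed.

Lemma sumn_incr_nth (s : seq nat) i : sumn (incr_nth s i) = (sumn s).+1.
Proof. by elim: s i => [|a s IHs] [|i] //=; rewrite ?sumn_ncons ?IHs ?addnS. Qed.

Section FirstEntryRow.

Variables (lam mu : seq nat) (r : nat).
Implicit Types (x : cellT lam) (T : filling lam).
Hypotheses (lam_dec : forall i, nth 0 lam i.+1 <= nth 0 lam i)
  (mu_dec : forall i, nth 0 mu i.+1 <= nth 0 mu i)
  (sumn_mu_lt : sumn mu < sumn lam).

Local Notation mu' := (incr_nth mu r).

Section Addable.

Hypothesis addable_r : addable_cell lam mu r.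

Let lt_mu_lam : nth 0 mu r < nth 0 lam r. Proof. by case/andP: addable_r. Qed.

Let lt_r_size : r < size lam.
Proof. by rewrite ltnNge; apply: contraTN lt_mu_lam => /(nth_default 0) ->. Qed.

Let lt_mu_sumn : nth 0 mu r < sumn lam.
Proof. exact: leq_trans lt_mu_lam (nth_le_sumn _ _). Qed.

Let x0 : cellT lam := (Ordinal lt_r_size, Ordinal lt_mu_sumn).

Let x0E x : (x == x0) = (r == x.1 :> nat) && (x.2 == nth 0 mu r :> nat).
Proof. by apply/eqP/andP => [-> // | [/eqP r_x1 /eqP x2_mu]]; apply: cell_eq. Qed.

Let x0_in_mu : in_skewc mu x0.
Proof. by rewrite /in_skewc /in_skew /= leqnn. Qed.

Let skew_mu x : in_skewc mu x = in_skewc mu' x || (x == x0).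
Proof.
by rewrite /in_skewc /in_skew nth_incr_nth x0E; case: eqP => [<- | _]; rewrite ?eqxx /=; lia.
Qed.

Let x0_notin_mu' : ~~ in_skewc mu' x0.
Proof. by rewrite /in_skewc /in_skew nth_incr_nth /= eqxx; lia. Qed.

Let x0_row_min x : in_skewc mu x -> x.1 = x0.1 :> nat -> x0.2 <= x.2.
Proof. by rewrite /in_skewc /in_skew => /andP[le_mu_x _] /= <-. Qed.

Let x0_col_min x : in_skewc mu x -> x.2 = x0.2 :> nat -> x0.1 <= x.1.
Proof.
rewrite /in_skewc /in_skew /= => /andP[le_mu_x _] x2E; rewrite leqNgt; apply/negP => lt_x_r.
have mu_mono : {homo nth 0 mu : i j / i <= j >-> j <= i}.
  exact: homo_leq (fun=> leqnn _) (fun _ _ _ le_yx le_zy => leq_trans le_zy le_yx) mu_dec.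
have r_gt0 : 0 < r by apply: leq_ltn_trans lt_x_r.
have /andP[_] := addable_r; rewrite eqn0Ngt r_gt0 /= => lt_mu_pred.
have := mu_mono x.1 r.-1; rewrite -ltnS prednK // => /(_ lt_x_r); lia.
Qed.

Lemma card_syt_row_of_one_addable :
  #|[set T : filling lam | is_syt mu T && (row_of_one mu T == r)]| = num_syt lam mu'.
Proof.
rewrite -(card_syt_one_at skew_mu x0_notin_mu' (sumn_incr_nth _ _) sumn_mu_lt
                          x0_row_min x0_col_min).
apply: eq_card => T; rewrite !inE; apply: andb_id2l => sytT.
have [x [Sx Tx1 row_x]] := row_of_oneP sytT sumn_mu_lt.
rewrite -row_x; apply/eqP/eqP => [x1_r | Tx0_1].
  have [x2_mu _] := syt_one_addable lam_dec sytT Sx Tx1.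
  by have -> : x0 = x by apply: cell_eq; rewrite /= ?x2_mu x1_r.
by have -> : x = x0 by apply: (syt_inj sytT) => //; apply: val_inj; rewrite /= Tx1 Tx0_1.
Qed.

End Addable.

Lemma card_syt_row_of_one :
  #|[set T : filling lam | is_syt mu T && (row_of_one mu T == r)]| =
  if addable_cell lam mu r then num_syt lam mu' else 0.
Proof.
case: ifP => [|not_addable]; first exact: card_syt_row_of_one_addable.
apply/eqP; rewrite cards_eq0; apply/eqP/setP => T; rewrite !inE.
apply/negbTE/negP => /andP[sytT /eqP row_r].
have [x [Sx Tx1 row_x]] := row_of_oneP sytT sumn_mu_lt.
have [_] := syt_one_addable lam_dec sytT Sx Tx1.
by rewrite row_x row_r not_addable.
Qed.

End FirstEntryRow.

Lemma num_syt_nth_eq (lam mu mu' : seq nat) :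
  nth 0 mu =1 nth 0 mu' -> sumn mu = sumn mu' -> num_syt lam mu = num_syt lam mu'.
Proof.
move=> eq_nth eq_sum.
have eq_skew (x : cellT lam) : in_skewc mu x = in_skewc mu' x by rewrite /in_skewc /in_skew eq_nth.
apply: eq_card => T; rewrite !inE /is_syt eq_sum.
congr [&& _, _, _, _ & _]; apply: eq_forallb => x; rewrite ?eq_skew //.
- by congr (_ ==> (_ == 1)); apply: eq_card => y; rewrite !inE eq_skew.
- by apply: eq_forallb => y; rewrite !eq_skew.
- by apply: eq_forallb => y; rewrite !eq_skew.
Qed.

Lemma num_syt_self (lam : seq nat) : num_syt lam lam = 1.
Proof.
have no_cell (x : cellT lam) : in_skewc lam x = false.
  by rewrite /in_skewc /in_skew; case: leqP.
apply/eqP/cards1P; exists [ffun => ord0]; apply/setP => T; rewrite !inE.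
apply/is_sytP/eqP => [[out_0 _ _ _ _] | ->].
  by apply/ffunP => x; apply: val_inj; rewrite ffunE /= out_0 ?no_cell.
split=> [x | x | v | x y | x y]; rewrite ?no_cell ?ffunE //.
by rewrite subnn; case: (nat_of_ord v) => [|[]].
Qed.

(** * Shapes with at most three rows *)

Lemma nth_lam3 a b c : b <= a -> c <= b -> nth 0 (lam3 a b c) =1 nth 0 [:: a; b; c].
Proof.
by case: a b c => [|a] [|b] [|c] //= _ _ [|[|[|i]]]; rewrite //= ?nth_nil.
Qed.

Lemma sumn_lam3 a b c : sumn (lam3 a b c) = a + b + c.
Proof. by case: a b c => [|a] [|b] [|c]; rewrite /= ?addn0 ?addnA. Qed.

Lemma size_lam3 a b c : size (lam3 a b c) <= 3.
Proof. by rewrite size_filter count_size. Qed.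

Lemma num_syt_lam3S a b c m1 m2 m3 : b <= a -> c <= b -> m2 <= m1 -> m3 <= m2 ->
  m1 + m2 + m3 < a + b + c ->
  num_syt (lam3 a b c) [:: m1; m2; m3] =
    (if m1 < a then num_syt (lam3 a b c) [:: m1.+1; m2; m3] else 0) +
    (if (m2 < b) && (m2 < m1) then num_syt (lam3 a b c) [:: m1; m2.+1; m3] else 0) +
    (if (m3 < c) && (m3 < m2) then num_syt (lam3 a b c) [:: m1; m2; m3.+1] else 0).
Proof.
move=> le_ba le_cb le_21 le_32 lt_sum; set lam := lam3 a b c; set mu := [:: m1; m2; m3].
have lt_sumn : sumn mu < sumn lam by rewrite sumn_lam3 /= addn0 addnA.
have lam_dec i : nth 0 lam i.+1 <= nth 0 lam i by rewrite !nth_lam3 //; case: i => [|[|[|i]]].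
have mu_dec i : nth 0 mu i.+1 <= nth 0 mu i by case: i => [|[|[|i]]].
rewrite {1}/num_syt (card_set_partition_nat (f := row_of_one mu) (K := 3)); last first.
  move=> T /row_of_oneP/(_ lt_sumn)[x [_ _ <-]].
  exact: leq_trans (ltn_ord x.1) (size_lam3 a b c).
rewrite !big_ord_recr big_ord0 /= !card_syt_row_of_one //.
by rewrite /addable_cell !nth_lam3 //= andbT.
Qed.

Definition num_syt3 (n m1 m2 m3 : nat) : nat :=
  \sum_(a < n.+1) \sum_(b < n.+1) \sum_(c < n.+1)
    (if [&& b <= a, c <= b, a + b + c == n, m1 <= a, m2 <= b & m3 <= c]
     then num_syt (lam3 a b c) [:: m1; m2; m3] else 0).

Lemma sum_nat_if_const (b : bool) (I : Type) (r : seq I) (F : I -> nat) :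
  \sum_(i <- r) (if b then F i else 0) = if b then \sum_(i <- r) F i else 0.
Proof. by case: b; rewrite // big1. Qed.

Lemma num_syt3S n m1 m2 m3 : m2 <= m1 -> m3 <= m2 -> m1 + m2 + m3 < n ->
  num_syt3 n m1 m2 m3 = num_syt3 n m1.+1 m2 m3 +
    (if m2 < m1 then num_syt3 n m1 m2.+1 m3 else 0) +
    (if m3 < m2 then num_syt3 n m1 m2 m3.+1 else 0).
Proof.
move=> le_21 le_32 lt_n; rewrite /num_syt3.
rewrite -!sum_nat_if_const -!big_split; apply: eq_bigr => a _.
rewrite -!sum_nat_if_const -!big_split; apply: eq_bigr => b _.
rewrite -!sum_nat_if_const -!big_split; apply: eq_bigr => c _ /=.
case: (boolP [&& b <= a, c <= b & a + b + c == n]) => [/and3P[le_ba le_cb /eqP sum_n] | not_shape].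
  rewrite le_ba le_cb sum_n eqxx /=.
  case: (leqP m1 a) => [le_1a | /ltnW le_a1]; last first.
    by rewrite ltnNge le_a1 /= !if_same.
  case: (leqP m2 b) => [le_2b | /ltnW le_b2]; last first.
    by rewrite [m2 < b]ltnNge le_b2 /= !andbF !if_same.
  case: (leqP m3 c) => [le_3c | /ltnW le_c3]; last first.
    by rewrite [m3 < c]ltnNge le_c3 /= !andbF !if_same.
  rewrite num_syt_lam3S //; last by lia.
  by rewrite /= !andbT; case: (m2 < m1); case: (m3 < m2); rewrite ?andbT ?andbF.
by move: not_shape; case: (b <= a); case: (c <= b); case: (a + b + c == n); rewrite //= ?if_same.
Qed.

Lemma num_syt3_full m1 m2 m3 : m2 <= m1 -> m3 <= m2 -> num_syt3 (m1 + m2 + m3) m1 m2 m3 = 1.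
Proof.
move=> le_21 le_32; rewrite /num_syt3; set n := m1 + m2 + m3.
have only_mu (a b c : nat) :
    (if [&& b <= a, c <= b, a + b + c == n, m1 <= a, m2 <= b & m3 <= c]
     then num_syt (lam3 a b c) [:: m1; m2; m3] else 0) =
    if a == m1 then if b == m2 then if c == m3 then 1 else 0 else 0 else 0.
  case: (eqVneq a m1) => [-> | ?]; case: (eqVneq b m2) => [-> | ?];
    case: (eqVneq c m3) => [-> | ?]; rewrite ?if_same; try by case: ifP => //; lia.
  rewrite !leqnn le_21 le_32 eqxx /= (@num_syt_nth_eq _ _ (lam3 m1 m2 m3)) ?num_syt_self //.
    by move=> i; rewrite nth_lam3.
  by rewrite sumn_lam3 /= addn0 addnA.
have sum_eq1 k : k <= n -> \sum_(i < n.+1) (if i == k :> nat then 1 else 0) = 1.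
  by move=> le_kn; rewrite -big_mkcond (big_ord1_eq _ (fun=> 1)) ltnS le_kn.
have [le_1n le_2n le_3n] : [/\ m1 <= n, m2 <= n & m3 <= n] by split; lia.
under eq_bigr => a _ do under eq_bigr => b _ do under eq_bigr => c _ do rewrite only_mu.
under eq_bigr => a _ do under eq_bigr => b _ do rewrite !sum_nat_if_const (sum_eq1 _ le_3n).
under eq_bigr => a _ do rewrite sum_nat_if_const (sum_eq1 _ le_2n).
exact: sum_eq1.
Qed.

Lemma rjk0n k : rjk 0 k = 0%R.
Proof. by rewrite /rjk /= !mul0r subrr. Qed.

Lemma rjkn0 j : rjk j 0 = 0%R.
Proof. by rewrite /rjk /= !mulr0 subrr. Qed.

Lemma num_syt3_motzkin_moment N n m1 m2 m3 : m2 <= m1 -> m3 <= m2 -> n = m1 + m2 + m3 + N ->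
  ((num_syt3 n m1 m2 m3)%:Z = motzkin_moment N (rjk (m2 - m3)%N.+1 (m1 - m2)%N.+1))%R.
Proof.
elim: N m1 m2 m3 => [|N IHN] m1 m2 m3 le_21 le_32 n_eq.
  by rewrite n_eq addn0 num_syt3_full // motzkin_moment0_rjk.
rewrite num_syt3S //; last by lia.
rewrite !PoszD -motzkin_momentXM mulX_rjk // 2!raddfD; congr (_ + _ + _)%R.
- by rewrite IHN ?(leqW le_21) ?subSn //; lia.
- case: ltnP => [lt_21 | le_12]; last by rewrite (_ : m1 - m2 = 0) ?rjkn0 ?raddf0 //; lia.
  rewrite IHN ?subnSK ?subSn //; lia.
- case: ltnP => [lt_32 | le_23]; last by rewrite (_ : m2 - m3 = 0) ?rjk0n ?raddf0 //; lia.
  rewrite IHN ?subnSK //; lia.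
Qed.

Lemma contained2_lam3 m1 m2 a b c : 0 < m2 -> b <= a -> c <= b ->
  contained [:: m1; m2] (lam3 a b c) = (m1 <= a) && (m2 <= b).
Proof.
move=> m2_gt0 le_ba le_cb; rewrite /contained /= !nth_lam3 //= andbT.
case: b le_ba le_cb => [|b] le_ba le_cb; first by rewrite [m2 <= 0]leqNgt m2_gt0 !andbF.
by case: a c le_ba le_cb => [|a] [|c].
Qed.

Lemma sum_lam3_contained_num_syt n mu1 mu2 : 0 < mu2 ->
  \sum_(a < n.+1) \sum_(b < n.+1) \sum_(c < n.+1)
    (if [&& b <= a, c <= b, a + b + c == n & contained [:: mu1; mu2] (lam3 a b c)]
     then num_syt (lam3 a b c) [:: mu1; mu2] else 0) = num_syt3 n mu1 mu2 0.
Proof.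
move=> mu2_gt0; apply: eq_bigr => a _; apply: eq_bigr => b _; apply: eq_bigr => c _.
case: (boolP ((b <= a) && (c <= b))) => [/andP[le_ba le_cb] | not_shape]; last first.
  by case/nandP: not_shape => /negbTE ->; rewrite ?andbF.
rewrite le_ba le_cb contained2_lam3 // andbT.
rewrite (@num_syt_nth_eq _ [:: mu1; mu2] [:: mu1; mu2; 0]) //.
by move=> [|[|[|i]]] //=; rewrite !nth_nil.
Qed.

Theorem theorem2p2 (mu1 mu2 n : nat) :
  0 < mu2 -> mu2 <= mu1 -> mu1 + mu2 <= n ->
  let j := mu2.+1 in
  let k := (mu1 - mu2).+1 in
  ((\sum_(a < n.+1) \sum_(b < n.+1) \sum_(c < n.+1)
      (if [&& b <= a, c <= b, a + b + c == n &
              contained [:: mu1; mu2] (lam3 a b c)]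
       then num_syt (lam3 a b c) [:: mu1; mu2] else 0))%N%:Z
   = \sum_(i < size (rjk j k))
       (rjk j k)`_i * (motzkin (i + (n - (mu1 + mu2))))%:Z)%R.
Proof.
move=> mu2_gt0 le_21 le_n j k; rewrite sum_lam3_contained_num_syt //.
by rewrite (@num_syt3_motzkin_moment (n - (mu1 + mu2))) ?addn0 ?subnKC // subn0.
Qed.
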